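(* For every $n\in\mathbb{N}$ there exists a constant $N\in\mathbb{N}$ such that the Torrent algorithm, run on any input $X\in\mathbb{R}^{n\times d}$, $Y\in\mathbb{R}^n$, $a\in\{1,\dots,n\}$, terminates (its while-loop stops) after fewer than $N$ iterations.
   Context: For $S\subseteq\{1,\dots,n\}$, $X_S$ and $Y_S$ denote the rows/entries with indices in $S$, and $\hat\beta^S_{\mathrm{OLS}}(X,Y):=(X_S^\top X_S)^{+}X_S^\top Y_S$ ($^{+}$: Moore–Penrose inverse). For $v\in\mathbb{R}^n$ and $a\in\{1,\dots,n\}$, $\mathrm{HT}(v,a)$ is the set of indices of the $a$ smallest entries of $v$, ties broken by a fixed deterministic rule. Torrent: set $S_0=\{1,\dots,n\}$, $e=Y$, $\mathrm{err}=\infty$, $t=0$. While $\|e\|_2<\mathrm{err}$ (here $e$ is the residual vector indexed by the current set $S_t$): set $t\gets t+1$, $\mathrm{err}\gets\|e\|_2$, $\hat\beta^t\gets\hat\beta^{S_{t-1}}_{\mathrm{OLS}}(X,Y)$, $v\gets|Y-X\hat\beta^t|$ (entrywise absolute value), $S_t\gets\mathrm{HT}(v,a)$, $e\gets|Y_{S_t}-X_{S_t}\hat\beta^t|$. Return $\hat\beta^t$. *)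

From HB Require Import structures.
From Stdlib Require Import Reals ClassicalEpsilon.
From mathcomp Require Import all_boot all_order all_algebra.
From mathcomp Require Import Rstruct.
Set Implicit Arguments. Unset Strict Implicit. Unset Printing Implicit Defensive.
Import Order.TTheory GRing.Theory Num.Theory.
Local Open Scope ring_scope.

Definition penrose {m k : nat} (A : 'M[R]_(m, k)) (B : 'M[R]_(k, m)) : Prop :=
  [/\ A *m B *m A = A, B *m A *m B = B, (A *m B)^T = A *m B & (B *m A)^T = B *m A].

Definition mp_inv {m k : nat} (A : 'M[R]_(m, k)) : 'M[R]_(k, m) :=
  epsilon (inhabits 0) (penrose A).

(* X_S : the rows of M with index in S (in increasing order of index). *)
Definition rows_of {n c : nat} (S : {set 'I_n}) (M : 'M[R]_(n, c)) : 'M[R]_(#|S|, c) :=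
  \matrix_(k < #|S|, j < c) M (enum_val k) j.

Definition ols {n d : nat} (S : {set 'I_n}) (X : 'M[R]_(n, d)) (Y : 'cV[R]_n) : 'cV[R]_d :=
  mp_inv ((rows_of S X)^T *m rows_of S X) *m (rows_of S X)^T *m rows_of S Y.

Definition abs_resid {n d : nat} (X : 'M[R]_(n, d)) (Y : 'cV[R]_n) (beta : 'cV[R]_d)
  : 'I_n -> R := fun i => `| Y i 0 - (X *m beta) i 0 |.

(* A hard-thresholding rule HT(v, a): for 1 <= a <= n, a set of exactly a indices
   carrying the a smallest entries of v (any fixed deterministic tie-breaking,
   i.e. any function of (v, a) with this property). *)
Definition is_hard_threshold {n : nat} (HT : ('I_n -> R) -> nat -> {set 'I_n}) : Prop :=
  forall (v : 'I_n -> R) (a : nat), (1 <= a <= n)%N ->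
    #|HT v a| = a /\
    (forall i j, i \in HT v a -> j \notin HT v a -> v i <= v j).

Fixpoint torrent_set {n d : nat} (HT : ('I_n -> R) -> nat -> {set 'I_n})
  (X : 'M[R]_(n, d)) (Y : 'cV[R]_n) (a : nat) (t : nat) : {set 'I_n} :=
  match t with
  | 0 => setT
  | t'.+1 => HT (abs_resid X Y (ols (torrent_set HT X Y a t') X Y)) a
  end.

(* beta^t = beta^{S_{t-1}}_OLS(X,Y) (meaningful for t >= 1). *)
Definition torrent_beta {n d : nat} (HT : ('I_n -> R) -> nat -> {set 'I_n})
  (X : 'M[R]_(n, d)) (Y : 'cV[R]_n) (a : nat) (t : nat) : 'cV[R]_d :=
  ols (torrent_set HT X Y a t.-1) X Y.

Definition torrent_enorm {n d : nat} (HT : ('I_n -> R) -> nat -> {set 'I_n})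
  (X : 'M[R]_(n, d)) (Y : 'cV[R]_n) (a : nat) (t : nat) : R :=
  match t with
  | 0 => Num.sqrt (\sum_(i < n) (Y i 0) ^+ 2)
  | _ => Num.sqrt (\sum_(i in torrent_set HT X Y a t)
                     (abs_resid X Y (torrent_beta HT X Y a t) i) ^+ 2)
  end.

(* After iteration t >= 1, err = ||e_{t-1}||_2 and the while-test is
   ||e_t||_2 < err; the loop stops after iteration t iff this test fails.
   (The test before the first iteration, ||Y|| < infinity, always succeeds.) *)
Definition torrent_stops_after {n d : nat} (HT : ('I_n -> R) -> nat -> {set 'I_n})
  (X : 'M[R]_(n, d)) (Y : 'cV[R]_n) (a : nat) (t : nat) : Prop :=
  (0 < t)%N /\ ~ (torrent_enorm HT X Y a t < torrent_enorm HT X Y a t.-1).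

From HB Require Import structures.
From Stdlib Require Import Reals.
From mathcomp Require Import all_boot all_order all_algebra.
From mathcomp Require Import Rstruct.
Set Implicit Arguments. Unset Strict Implicit. Unset Printing Implicit Defensive.
Local Open Scope ring_scope.
Import Order.TTheory.

(* The residual norm after iteration t+1 is a function of S_t alone. Only
   finitely many index sets exist, so among S_0, ..., S_K (K the number of
   subsets) two coincide, say S_i = S_j with i < j; then the norms after
   iterations i+1 and j+1 are equal, which is impossible if the loop had kept
   strictly decreasing the norm up to iteration K+1. *)

Lemma pigeonhole_nat (T : finType) (f : nat -> T) :
  exists i j, (i < j <= #|T|)%N /\ f i = f j.
Proof.
have /injectivePn[i [j neq_ij fij]] : ~~ injectiveb (fun k : 'I_#|T|.+1 => f k).
  by apply/injectiveP => /leq_card; rewrite card_ord ltnn.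
have le_T (k : 'I_#|T|.+1) : (k <= #|T|)%N by rewrite -ltnS.
case: (ltngtP i j) => [ij | ji | /val_inj eq_ij]; last by rewrite eq_ij eqxx in neq_ij.
- by exists i, j; rewrite ij le_T.
- by exists j, i; rewrite ji le_T.
Qed.

Section FiniteStateDescent.

Variables (T : finType) (disp : Order.disp_t) (U : porderType disp).
Variables (state : nat -> T) (e : nat -> U).
Hypothesis e_succ_state : forall i j, state i = state j -> e i.+1 = e j.+1.

Lemma descent_stops : exists2 t, (0 < t <= #|T|.+1)%N & ~~ (e t < e t.-1)%O.
Proof.
have [/existsP[t /andP[t0 not_lt]] | /existsPn e_desc] :=
  boolP [exists t : 'I_#|T|.+2, (0 < t)%N && ~~ (e t < e t.-1)%O].
  by exists t => //; rewrite t0 -ltnS ltn_ord.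
pose D := [pred k | k <= #|T|.+1]%N.
have e_lt : {in D &, {homo e : i j / (i < j)%N >-> (j < i)%O}}.
  apply: (@homo_ltn_in _ D e (fun x y => y < x)%O)
    => [y x z yx zy | i j _ jD k /andP[_ /ltnW kj] | i _ iD].
  - exact: lt_trans zy yx.
  - exact: leq_trans kj jD.
  by have := e_desc (Ordinal (iD : (i.+1 < #|T|.+2)%N)); rewrite /= negbK.
have [i [j [/andP[ij jT] sij]]] := pigeonhole_nat state.
have := e_lt i.+1 j.+1 (ltnW (leq_trans ij jT)) jT ij.
by rewrite (e_succ_state sij) ltxx.
Qed.

End FiniteStateDescent.

Lemma torrent_enormS_set n d (HT : ('I_n -> R) -> nat -> {set 'I_n})
    (X : 'M[R]_(n, d)) (Y : 'cV[R]_n) a i j :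
  torrent_set HT X Y a i = torrent_set HT X Y a j ->
  torrent_enorm HT X Y a i.+1 = torrent_enorm HT X Y a j.+1.
Proof. by move=> Sij; rewrite /torrent_enorm /torrent_beta /= Sij. Qed.

Theorem lemma3p2 (n : nat) :
  exists N : nat,
    forall (HT : ('I_n -> R) -> nat -> {set 'I_n}), is_hard_threshold HT ->
    forall (d : nat) (X : 'M[R]_(n, d)) (Y : 'cV[R]_n) (a : nat),
      (1 <= a <= n)%N ->
      exists t : nat, (t < N)%N /\ torrent_stops_after HT X Y a t.
Proof.
exists #|{set 'I_n}|.+2 => HT _ d X Y a _.
have [t /andP[t0 tN] not_lt] := descent_stops (@torrent_enormS_set _ _ HT X Y a).
by exists t; split; [rewrite ltnS | split; last exact/negP].
Qed.
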